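(* Let $k\ge3$ and let $\pi\in\mathcal{S}_n$ be a Schröder permutation. Then $\pi$ avoids the pattern $2\,1\,3\,4\cdots k$ if and only if every element $(i,j)\in\mathcal{E}(\pi)$ satisfies $i+j\ge n+3-k+\rho(i,j)$.
   Context: A permutation avoids $\tau\in\mathcal{S}_k$ if no subsequence of length $k$ is in the same relative order as $\tau$. A Schröder permutation is one avoiding both $1243$ and $2143$. Represent $\pi\in\mathcal{S}_n$ by an $n\times n$ array, rows $i$ numbered top to bottom, columns $j$ left to right, with a dot in square $(i,\pi_i)$. The diagram $D(\pi)$ is the set of squares $(i,j)$ with $\pi_i>j$ and $\pi^{-1}(j)>i$. The essential set $\mathcal{E}(\pi)$ is the set of $(i,j)\in D(\pi)$ with $(i+1,j)\notin D(\pi)$ and $(i,j+1)\notin D(\pi)$ (squares outside the array count as not in $D(\pi)$). The rank of $(i,j)$ is $\rho(i,j)=\#\{k'<i:\pi_{k'}<j\}$. *)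

From mathcomp Require Import all_boot all_order all_fingroup.
Set Implicit Arguments. Unset Strict Implicit. Unset Printing Implicit Defensive.

(* Patterns are given as sequences of nat (0-based values), e.g. 2143 is
   [:: 1; 0; 3; 2]. Permutations are s : 'S_n acting on 'I_n (0-based). *)

Definition contains (n : nat) (s : 'S_n) (tau : seq nat) : Prop :=
  exists f : 'I_(size tau) -> 'I_n,
    (forall a b : 'I_(size tau), a < b -> f a < f b) /\
    (forall a b : 'I_(size tau),
        (s (f a) < s (f b)) = (nth 0 tau a < nth 0 tau b)).

Definition avoids (n : nat) (s : 'S_n) (tau : seq nat) : Prop :=
  ~ contains s tau.

Definition schroder (n : nat) (s : 'S_n) : Prop :=
  avoids s [:: 0; 1; 3; 2] /\ avoids s [:: 1; 0; 3; 2].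

Definition pat2134 (k : nat) : seq nat := 1 :: 0 :: iota 2 (k - 2).

(* 1-based view: for 1 <= i <= n, pval s i = pi_i in {1..n}. *)
Definition pval (n : nat) (s : 'S_n) (i : nat) : nat :=
  if i.-1 < n =P true is ReflectT h then (val (s (Ordinal h))).+1 else 0.

Definition pinv (n : nat) (s : 'S_n) (j : nat) : nat :=
  if j.-1 < n =P true is ReflectT h then (val ((s^-1)%g (Ordinal h))).+1 else 0.

Definition in_diagram (n : nat) (s : 'S_n) (i j : nat) : bool :=
  [&& 1 <= i <= n, 1 <= j <= n, j < pval s i & i < pinv s j].

Definition in_essential (n : nat) (s : 'S_n) (i j : nat) : bool :=
  [&& in_diagram s i j, ~~ in_diagram s i.+1 j & ~~ in_diagram s i j.+1].

Definition rank (n : nat) (s : 'S_n) (i j : nat) : nat :=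
  count (fun k' => pval s k' < j) (iota 1 i.-1).

(* For a cell (i, j) of the diagram, inclusion-exclusion on the dots lying
   weakly above row i or weakly left of column j gives
   n + rho(i, j) = i + j + #{dots strictly south-east of (i, j)},
   so the inequality says that at most k - 3 dots lie south-east of each
   essential cell.  If an essential cell (i, j) has k - 2 such dots, the dots
   in column j + 1 and in row i + 1 form a 21 whose south-east region contains
   them; as pi avoids 2143, the dots south-east of a 21 increase, which yields
   2134...k.  Conversely, an occurrence of 2134...k gives an inversion whose
   south-east region holds k - 2 dots, and the diagram cell maximising i + j
   in the rectangle spanned by that inversion is essential and has this
   region south-east of it. *)

From mathcomp Require Import all_boot all_order all_fingroup zify.

Set Implicit Arguments.
Unset Strict Implicit.

Lemma sorted_enum_ord m (A : {pred 'I_m}) : sorted (relpre val ltn) (enum A).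
Proof.
have ltn_ord_trans : transitive (relpre (val : 'I_m -> nat) ltn).
  by move=> ? ? ?; apply: ltn_trans.
rewrite /enum_mem (sorted_filter ltn_ord_trans) // -enumT -sorted_map.
by rewrite val_enum_ord iota_ltn_sorted.
Qed.

Lemma card_ord_count m j (P : pred nat) : j <= m ->
  #|[set a : 'I_m | (a < j) && P a]| = count P (iota 0 j).
Proof.
move=> jm; rewrite cardsE cardE /enum_mem size_filter -enumT.
rewrite -(count_map val (fun a => (a < j) && P a)) val_enum_ord.
rewrite -(subnKC jm) iotaD count_cat add0n.
rewrite (@eq_in_count _ _ pred0 (iota j _)) ?count_pred0 ?addn0; last first.
  by move=> a; rewrite mem_iota => /andP[ja _]; rewrite ltnNge ja.
by apply: eq_in_count => a; rewrite mem_iota => /andP[_ ->].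
Qed.

Lemma card_ord_lt m j : j <= m -> #|[set a : 'I_m | a < j]| = j.
Proof.
move=> jm; rewrite -[RHS](size_iota 0) -count_predT -(card_ord_count predT jm).
by apply: eq_card => a; rewrite !inE andbT.
Qed.

Section Diagram.

Variables (n : nat) (s : 'S_n).

(* Indices are 0-based here: the cell (i, j) of the paper is (I.+1, J.+1). *)
Definition southeast (I J : nat) : {set 'I_n} :=
  [set T : 'I_n | (I < T) && (J < s T)].

Lemma pvalE (I : 'I_n) : pval s I.+1 = (s I).+1.
Proof.
rewrite /pval /=; case: eqP => [lt_In|]; last by rewrite ltn_ord.
by congr (val (s _)).+1; apply: val_inj.
Qed.

Lemma pinvE (J : 'I_n) : pinv s J.+1 = ((s^-1)%g J).+1.
Proof.
rewrite /pinv /=; case: eqP => [lt_Jn|]; last by rewrite ltn_ord.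
by congr (val ((s^-1)%g _)).+1; apply: val_inj.
Qed.

Lemma diagE (I J : 'I_n) :
  in_diagram s I.+1 J.+1 = (J < s I) && (I < (s^-1)%g J).
Proof. by rewrite /in_diagram pvalE pinvE !ltnS !ltn_ord. Qed.

Lemma in_diagramP i j :
  reflect (exists I J : 'I_n, [/\ i = I.+1, j = J.+1, J < s I & I < (s^-1)%g J])
          (in_diagram s i j).
Proof.
apply: (iffP idP) => [|[I [J [-> -> JI IJ]]]]; last first.
  by rewrite diagE JI IJ.
case: i j => [|i] [|j]; rewrite /in_diagram /= ?andbF // => /and4P[i_lt j_lt JI IJ].
exists (Ordinal i_lt), (Ordinal j_lt).
by move: JI IJ; rewrite (pvalE (Ordinal i_lt)) (pinvE (Ordinal j_lt)) !ltnS.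
Qed.

Lemma rankE (I : 'I_n) (J : nat) :
  rank s I.+1 J.+1 = #|[set T : 'I_n | (T < I) && (s T < J)]|.
Proof.
rewrite /rank /= (iotaDl 1 0) count_map -(card_ord_count _ (ltnW (ltn_ord I))).
by apply: eq_card => T; rewrite !inE /= add1n pvalE ltnS.
Qed.

Lemma card_southeast (I J : 'I_n) : J < s I -> I < (s^-1)%g J ->
  #|southeast I J| + I.+1 + J.+1 = n + rank s I.+1 J.+1.
Proof.
move=> JI IJ.
pose A := [set T : 'I_n | T < I.+1].
pose B := s @^-1: [set T : 'I_n | T < J.+1].
have cardA : #|A| = I.+1 := card_ord_lt (ltn_ord I).
have cardB : #|B| = J.+1 by rewrite card_preimset ?card_ord_lt //; exact: perm_inj.
have AIB : A :&: B = [set T : 'I_n | (T < I) && (s T < J)].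
  apply/setP => T; rewrite !inE !ltnS.
  apply/andP/andP => [[TI sTJ]|[/ltnW-> /ltnW->]] //; split.
  - rewrite ltn_neqAle TI andbT; apply: contraTneq sTJ => /val_inj ->.
    by rewrite -ltnNge.
  - rewrite ltn_neqAle sTJ andbT; apply: contraTneq TI => /val_inj eJ.
    by rewrite -ltnNge -[T](permK s) eJ.
have CAB : ~: (A :|: B) = southeast I J.
  by apply/setP => T; rewrite !inE negb_or -!leqNgt.
rewrite rankE -AIB -CAB -cardA -cardB.
by rewrite -addnA -cardsUI addnA [#|~: _| + _]addnC cardsC card_ord.
Qed.

Lemma essential_boundE k (I J : 'I_n) : in_essential s I.+1 J.+1 ->
  (n + 3 + rank s I.+1 J.+1 <= I.+1 + J.+1 + k) = (#|southeast I J| + 3 <= k).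
Proof.
case/and3P; rewrite diagE => /andP[JI IJ] _ _.
by rewrite addnAC -(card_southeast JI IJ); apply/idP/idP; lia.
Qed.

Lemma essential_inversion (I J : 'I_n) : in_essential s I.+1 J.+1 ->
  exists E C : 'I_n,
    [/\ E < C, s C < s E & southeast I J \subset southeast C (s E)].
Proof.
case/and3P; rewrite diagE => /andP[JI IJ] notD_down notD_right.
have lt_I1n : I.+1 < n := leq_ltn_trans IJ (ltn_ord _).
have lt_J1n : J.+1 < n := leq_ltn_trans JI (ltn_ord _).
set C := Ordinal lt_I1n; set J1 := Ordinal lt_J1n; set E := (s^-1)%g J1.
have sE : s E = J1 by rewrite permKV.
have sC_le : s C <= J.
  rewrite leqNgt; apply: contra notD_down => JC.
  rewrite -[I.+2]/(C.+1) diagE JC andTb ltn_neqAle; apply/andP; split=> //.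
  by apply: contraTneq JC => /val_inj ->; rewrite permKV ltnn.
have E_le : E <= I.
  rewrite leqNgt; apply: contra notD_right => IE.
  rewrite -[J.+2]/(J1.+1) diagE; apply/andP; split; last exact: IE.
  rewrite ltn_neqAle; apply/andP; split; last exact: JI.
  by apply: contraTneq IE => /val_inj eJ1; rewrite /E eJ1 permK ltnn.
exists E, C; split; first exact: leq_ltn_trans E_le (ltnSn I).
  by rewrite sE ltnS.
apply/subsetP => T; rewrite !inE => /andP[IT JT]; apply/andP; split.
  rewrite ltn_neqAle IT andbT; apply: contraTneq JT => /val_inj <-.
  by rewrite -leqNgt.
rewrite sE ltn_neqAle JT andbT; apply: contraTneq IT => /val_inj sT.
by rewrite -leqNgt -[T](permK s) -sT.
Qed.

Lemma inversion_essential (x y : 'I_n) : x < y -> s y < s x ->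
  exists I J : 'I_n,
    in_essential s I.+1 J.+1 /\ southeast y (s x) \subset southeast I J.
Proof.
move=> xy syx.
(* The diagram cells of the rectangle spanned by the inversion are closed
   under moving down or right within the diagram, so a maximal one is
   essential. *)
pose P (p : 'I_n * 'I_n) := [&& x <= p.1, s y <= p.2, p.1 <= y, p.2 <= s x
                              & in_diagram s p.1.+1 p.2.+1].
have P0 : P (x, s y).
  apply/and5P; split; [exact: leqnn | exact: leqnn | exact: ltnW | exact: ltnW |].
  by rewrite /= diagE permK; apply/andP.
case: (arg_maxnP (fun p : 'I_n * 'I_n => p.1 + p.2) P0) => [[I J]].
case/and5P=> /= xI syJ Iy Jsx DIJ maxIJ.
move: (DIJ); rewrite diagE => /andP[JI IJ].
have lt_Iy : I < y.
  rewrite ltn_neqAle; apply/andP; split=> //.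
  by apply: contraTneq JI => /val_inj ->; rewrite -leqNgt.
have lt_Jsx : J < s x.
  rewrite ltn_neqAle; apply/andP; split=> //.
  by apply: contraTneq IJ => /val_inj ->; rewrite permK -leqNgt.
have not_below (I' J' : 'I_n) : in_diagram s I'.+1 J'.+1 ->
    I <= I' <= y -> J <= J' <= s x -> I' + J' <= I + J.
  move=> D /andP[II' I'y] /andP[JJ' J'sx]; apply: (maxIJ (I', J')).
  by apply/and5P; split; [exact: leq_trans xI II' | exact: leq_trans syJ JJ' | | |].
exists I, J; split.
  rewrite /in_essential DIJ /=; apply/andP; split; apply/negP;
    move=> /[dup] D /in_diagramP[I' [J' [eI eJ _ _]]]; rewrite eI eJ in D;
    by have := not_below I' J' D; lia.
apply/subsetP => T; rewrite !inE => /andP[yT sxT].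
by rewrite (ltn_trans lt_Iy yT) (ltn_trans lt_Jsx sxT).
Qed.

End Diagram.

Lemma size_pat2134 k : 2 <= k -> size (pat2134 k) = k.
Proof. by move=> k2; rewrite /= size_iota -addn2 subnK. Qed.

Lemma nth_pat2134 k c : c.+2 < k -> nth 0 (pat2134 k) c.+2 = c.+2.
Proof. by move=> ck; rewrite /= nth_iota // ltn_subRL. Qed.

Section Patterns.

Variables (n : nat) (s : 'S_n).

Lemma contains_of_points (tau : seq nat) (g : nat -> 'I_n) :
  (forall a, a < size tau -> nth 0 tau a < size tau) ->
  (forall a, a.+1 < size tau -> g (nth 0 tau a) < g (nth 0 tau a.+1)) ->
  (forall v, v.+1 < size tau -> s (g v) < s (g v.+1)) ->
  contains s tau.
Proof.
(* g v is the position of the entry of value v of the occurrence. *)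
move=> tau_lt pos_inc val_inc.
pose D := [pred a | a < size tau].
have D_convex : {in D &, forall i j k, i < k < j -> k \in D}.
  by move=> i j _ jD k /andP[_ kj]; apply: ltn_trans kj jD.
have pos_homo : {in D &, {homo (fun a => g (nth 0 tau a)) : a b / a < b >-> a < b}}.
  apply: homo_ltn_in D_convex _ => [? ? ? /ltn_trans|a _]; [exact|exact: pos_inc].
have val_homo : {in D &, {homo (fun v => val (s (g v))) : v w / v < w}}.
  apply: homo_ltn_in D_convex _ => [? ? ? /ltn_trans|v _]; [exact|exact: val_inc].
have val_mono := leqW_mono_in (leq_mono_in val_homo).
exists (fun a => g (nth 0 tau a)); split=> a b.
  exact: pos_homo (ltn_ord a) (ltn_ord b).
by rewrite val_mono // inE tau_lt.
Qed.

Lemma schroder_southeast_homo (E C : 'I_n) : schroder s -> E < C -> s C < s E ->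
  {in southeast s C (s E) &, {homo s : T1 T2 / T1 < T2}}.
Proof.
move=> [_ avoid2143] EC sCE T1 T2.
rewrite !inE => /andP[CT1 sET1] /andP[CT2 sET2] T12.
rewrite ltnNge leq_eqVlt negb_or; apply/andP; split.
  by rewrite val_eqE (inj_eq perm_inj) -val_eqE gtn_eqF.
apply/negP => sT21; apply: avoid2143.
by apply: (@contains_of_points _ (nth C [:: C; E; T2; T1]))
  => [[|[|[|[|a]]]]|[|[|[|a]]]|[|[|[|v]]]].
Qed.

Lemma contains_pat2134 k (E C : 'I_n) (A : {set 'I_n}) :
  2 <= k -> E < C -> s C < s E -> A \subset southeast s C (s E) ->
  {in A &, {homo s : T1 T2 / T1 < T2}} -> k - 2 <= #|A| ->
  contains s (pat2134 k).
Proof.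
move=> k2 EC sCE sub_A s_homo A_big.
pose u c := nth E (enum A) c.
have u_in c : c < k - 2 -> u c \in A.
  by move=> ck; rewrite -mem_enum mem_nth // -cardE (leq_trans ck A_big).
have u_inc c : c.+1 < k - 2 -> u c < u c.+1.
  move=> ck; apply: (sorted_ltn_nth _ _ (sorted_enum_ord A)) => //.
  - by move=> ? ? ? /ltn_trans; apply.
  - by rewrite inE -cardE (leq_trans _ A_big) // ltnW.
  - by rewrite inE -cardE (leq_trans ck A_big).
have southeast_A T : T \in A -> C < T /\ s E < s T.
  by move/(subsetP sub_A); rewrite inE => /andP.
pose g v := if v is c.+2 then u c else if v is 0 then C else E.
apply: (@contains_of_points _ g); rewrite size_pat2134 //.
- by case=> [|[|a]] ak; [exact: k2 | exact: ltnW k2 | rewrite nth_pat2134].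
- case=> [|[|a]] ak; first exact: EC.
    by rewrite (nth_pat2134 (c:=0)) //; apply: (southeast_A _ (u_in 0 _)).1; lia.
  have ak' : a.+2 < k := ltnW ak.
  by rewrite !nth_pat2134 //; apply: u_inc; lia.
case=> [|[|v]] vk; first exact: sCE.
  by apply: (southeast_A _ (u_in 0 _)).2; lia.
by apply: s_homo; [apply: u_in | apply: u_in | apply: u_inc]; lia.
Qed.

Lemma pat2134_inversion k : 2 <= k -> contains s (pat2134 k) ->
  exists x y : 'I_n, [/\ x < y, s y < s x & k - 2 <= #|southeast s y (s x)|].
Proof.
move=> k2 [f [f_inc f_val]].
pose a0 := Ordinal (isT : 0 < size (pat2134 k)).
pose a1 := Ordinal (isT : 1 < size (pat2134 k)).
pose B := [set a : 'I_(size (pat2134 k)) | 1 < a].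
have cardB : #|B| = k - 2.
  have -> : B = ~: [set a : 'I_(size (pat2134 k)) | a < 2].
    by apply/setP => a; rewrite !inE -leqNgt.
  by rewrite cardsCs setCK card_ord card_ord_lt size_pat2134.
have f_inj : injective f.
  move=> a b fab; apply: val_inj.
  by case: (ltngtP a b) => // /f_inc; rewrite fab ltnn.
exists (f a0), (f a1); split; first exact: f_inc.
  by rewrite f_val.
rewrite -cardB -(card_imset _ f_inj); apply/subset_leq_card/subsetP.
move=> _ /imsetP[a aB ->]; rewrite inE in aB; rewrite inE f_inc //= f_val.
case: a aB => [[|[|c]] ck] // _.
by rewrite nth_pat2134 // -(size_pat2134 k2).
Qed.

End Patterns.

Theorem theorem3p3 (n k : nat) (s : 'S_n) :
  3 <= k -> schroder s ->
  (avoids s (pat2134 k) <->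
   (forall i j : nat, in_essential s i j ->
      n + 3 + rank s i j <= i + j + k)).
Proof.
move=> k3 schroder_s; split=> [avoid i j ess | bound].
  have /and3P[/in_diagramP[I [J [ei ej _ _]]] _ _] := ess; subst i j.
  rewrite essential_boundE // leqNgt; apply/negP => big_se; apply: avoid.
  have [E [C [EC sCE sub]]] := essential_inversion ess.
  apply: (contains_pat2134 (ltnW k3) EC sCE (subxx _)).
    exact: schroder_southeast_homo.
  by have := subset_leq_card sub; lia.
move=> /(pat2134_inversion (ltnW k3)) [x [y [xy syx big_se]]].
have [I [J [ess sub]]] := inversion_essential xy syx.
have := bound _ _ ess; rewrite essential_boundE //.
by have := subset_leq_card sub; lia.
Qed.
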